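(* Let $\Phi\subseteq \mathrm{FO}\cup\sim\mathrm{FO}$ (w.l.o.g. no bound variable of a formula coincides with a free variable of the same formula). Let $C$ be a countably infinite set of fresh constant symbols $c^x_\delta$, and define $\Phi_f := \{\gamma(c^{x_1}_\delta,\ldots,c^{x_n}_\delta) \mid \gamma(x_1,\ldots,x_n)\in\Phi\cap\mathrm{FO},\ \sim\delta\in\Phi\cap\sim\mathrm{FO}\}\cup\{\neg\delta(c^{x_1}_\delta,\ldots,c^{x_n}_\delta)\mid \sim\delta(x_1,\ldots,x_n)\in\Phi\cap\sim\mathrm{FO}\}$. Then $\Phi$ is satisfiable in team semantics if and only if $\Phi_f$ is satisfiable in classical first-order semantics.
   Context: In first-order team semantics, an interpretation is $(\mathcal{A},T)$ with $\mathcal{A}$ a first-order structure and $T$ a set of assignments; $(\mathcal{A},T)\models\alpha$ for $\alpha\in\mathrm{FO}$ iff $(\mathcal{A},s)\models\alpha$ for all $s\in T$. The strong negation is $(\mathcal{A},T)\models\sim\varphi$ iff $(\mathcal{A},T)\not\models\varphi$, and $\sim\mathrm{FO}=\{\sim\alpha\mid\alpha\in\mathrm{FO}\}$ is a fragment of the Boolean closure $\mathcal{B}(\mathrm{FO})$ of $\mathrm{FO}$ under $\sim$ and material implication. *)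

From Stdlib Require Import List.
Import ListNotations.
Set Implicit Arguments.

(* The signature consists of an arbitrary type
   [Fs] of function symbols (constants of the original language are 0-ary
   function symbols) and an arbitrary type [Rs] of relation symbols.
   Terms and formulas are additionally parameterised by a type [K] of extra
   constant symbols; the original language uses [K := Empty_set], the
   extended language with the fresh constants c^x_delta uses
   [K := nat * form Fs Rs Empty_set]. *)

Section Syntax.
Variables (Fs Rs : Type).

Inductive term (K : Type) : Type :=
| Var : nat -> term K
| Cst : K -> term K
| Fn  : Fs -> list (term K) -> term K.

Inductive form (K : Type) : Type :=
| FTrue : form K
| FFalse : form K
| FEq : term K -> term K -> form K
| FRel : Rs -> list (term K) -> form K
| FNot : form K -> form K
| FAnd : form K -> form K -> form K
| FOr : form K -> form K -> form K
| FImp : form K -> form K -> form K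
| FAll : nat -> form K -> form K
| FEx : nat -> form K -> form K.

End Syntax.

Arguments Var {Fs K}.
Arguments Cst {Fs K}.
Arguments Fn {Fs K}.
Arguments FTrue {Fs Rs K}.
Arguments FFalse {Fs Rs K}.
Arguments FEq {Fs Rs K}.
Arguments FRel {Fs Rs K}.
Arguments FNot {Fs Rs K}.
Arguments FAnd {Fs Rs K}.
Arguments FOr {Fs Rs K}.
Arguments FImp {Fs Rs K}.
Arguments FAll {Fs Rs K}.
Arguments FEx {Fs Rs K}.

Record structure (Fs Rs : Type) : Type := {
  dom : Type;
  dom_inhabited : inhabited dom;
  ifun : Fs -> list dom -> dom;
  irel : Rs -> list dom -> Prop
}.

Definition upd {D : Type} (s : nat -> D) (x : nat) (d : D) : nat -> D :=
  fun y => if Nat.eqb y x then d else s y.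

Section Semantics.
Variables (Fs Rs K : Type) (A : structure Fs Rs) (ck : K -> dom A).

Fixpoint teval (s : nat -> dom A) (t : term Fs K) : dom A :=
  match t with
  | Var x => s x
  | Cst k => ck k
  | Fn f ts => ifun A f (map (teval s) ts)
  end.

Fixpoint sat (s : nat -> dom A) (phi : form Fs Rs K) : Prop :=
  match phi with
  | FTrue => True
  | FFalse => False
  | FEq t u => teval s t = teval s u
  | FRel r ts => irel A r (map (teval s) ts)
  | FNot p => ~ sat s p
  | FAnd p q => sat s p /\ sat s q
  | FOr p q => sat s p \/ sat s q
  | FImp p q => sat s p -> sat s q
  | FAll x p => forall d : dom A, sat (upd s x d) p
  | FEx x p => exists d : dom A, sat (upd s x d) p
  end.

End Semantics.

Definition fo (Fs Rs : Type) := form Fs Rs Empty_set.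

Definition sat0 (Fs Rs : Type) (A : structure Fs Rs) (s : nat -> dom A)
  (phi : fo Fs Rs) : Prop :=
  sat A (fun k : Empty_set => match k with end) s phi.

Inductive tform (Fs Rs : Type) : Type :=
| TFO : fo Fs Rs -> tform Fs Rs
| TSNeg : fo Fs Rs -> tform Fs Rs.

Arguments TFO {Fs Rs}.
Arguments TSNeg {Fs Rs}.

Definition team (Fs Rs : Type) (A : structure Fs Rs) := (nat -> dom A) -> Prop.

Definition team_sat_fo (Fs Rs : Type) (A : structure Fs Rs) (T : team A)
  (alpha : fo Fs Rs) : Prop :=
  forall s, T s -> sat0 A s alpha.

Definition team_sat (Fs Rs : Type) (A : structure Fs Rs) (T : team A)
  (phi : tform Fs Rs) : Prop :=
  match phi with
  | TFO alpha => team_sat_fo T alpha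
  | TSNeg alpha => ~ team_sat_fo T alpha
  end.

Definition team_satisfiable (Fs Rs : Type) (Phi : tform Fs Rs -> Prop) : Prop :=
  exists (A : structure Fs Rs) (T : team A),
    forall phi, Phi phi -> team_sat T phi.

(* Fresh constants c^x_delta are indexed by pairs (x, delta). *)
Definition ext_const (Fs Rs : Type) := (nat * fo Fs Rs)%type.
Definition efo (Fs Rs : Type) := form Fs Rs (ext_const Fs Rs).

Section Ground.
Variables (Fs Rs K : Type).

Fixpoint tground (sigma : nat -> term Fs K) (t : term Fs Empty_set) : term Fs K :=
  match t with
  | Var x => sigma x
  | Cst k => match k with end
  | Fn f ts => Fn f (map (tground sigma) ts)
  end.

Fixpoint ground (sigma : nat -> term Fs K) (phi : fo Fs Rs) : form Fs Rs K :=
  match phi with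
  | FTrue => FTrue
  | FFalse => FFalse
  | FEq t u => FEq (tground sigma t) (tground sigma u)
  | FRel r ts => FRel r (map (tground sigma) ts)
  | FNot p => FNot (ground sigma p)
  | FAnd p q => FAnd (ground sigma p) (ground sigma q)
  | FOr p q => FOr (ground sigma p) (ground sigma q)
  | FImp p q => FImp (ground sigma p) (ground sigma q)
  | FAll x p => FAll x (ground (fun y => if Nat.eqb y x then Var x else sigma y) p)
  | FEx x p => FEx x (ground (fun y => if Nat.eqb y x then Var x else sigma y) p)
  end.
End Ground.

Definition inst (Fs Rs : Type) (delta gamma : fo Fs Rs) : efo Fs Rs :=
  ground (fun x => Cst (x, delta)) gamma.

Definition Phi_f (Fs Rs : Type) (Phi : tform Fs Rs -> Prop) (psi : efo Fs Rs) : Prop :=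
  (exists gamma delta, Phi (TFO gamma) /\ Phi (TSNeg delta) /\ psi = inst delta gamma)
  \/ (exists delta, Phi (TSNeg delta) /\ psi = FNot (inst delta delta)).

Definition classically_satisfiable (Fs Rs : Type) (Psi : efo Fs Rs -> Prop) : Prop :=
  exists (A : structure Fs Rs) (ck : ext_const Fs Rs -> dom A) (s : nat -> dom A),
    forall psi, Psi psi -> sat A ck s psi.

(* Reading
   the fresh constants c^x_delta as the values at x of a chosen counterexample
   s_delta to each [~ delta] in Phi turns a team model into a model of Phi_f;
   conversely, the assignments x |-> c^x_delta of a model of Phi_f form a team
   satisfying Phi. *)

From Stdlib Require Import List Arith Classical ClassicalEpsilon FunctionalExtensionality.

Section Grounding.
Variables (Fs Rs K : Type) (A : structure Fs Rs) (ck : K -> dom A).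

Definition var_or_cst (sigma : nat -> term Fs K) : Prop :=
  forall y, sigma y = Var y \/ exists k, sigma y = Cst k.

Definition subst_eval (s : nat -> dom A) (sigma : nat -> term Fs K) : nat -> dom A :=
  fun y => teval A ck s (sigma y).

Fixpoint teval_tground (sigma : nat -> term Fs K) (s : nat -> dom A)
  (t : term Fs Empty_set) {struct t} :
  teval A ck s (tground sigma t)
  = teval A (fun k : Empty_set => match k with end) (subst_eval s sigma) t.
Proof.
  destruct t as [x | [] | f ts]; [reflexivity |].
  simpl; f_equal; rewrite map_map.
  induction ts as [| t ts IHts]; [reflexivity |].
  simpl; rewrite IHts, teval_tground; reflexivity.
Qed.

Lemma var_or_cst_binder (sigma : nat -> term Fs K) (x : nat) :
  var_or_cst sigma ->
  var_or_cst (fun y => if Nat.eqb y x then Var x else sigma y).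
Proof.
  intros Hsigma y; destruct (Nat.eqb_spec y x) as [-> | _]; [left |]; auto.
Qed.

(* Binders are not captured: the constants ignore [s], and a variable [y <> x]
   keeps its value when [x] is updated. *)
Lemma subst_eval_binder (sigma : nat -> term Fs K) (s : nat -> dom A) (x : nat) (d : dom A) :
  var_or_cst sigma ->
  subst_eval (upd s x d) (fun y => if Nat.eqb y x then Var x else sigma y)
  = upd (subst_eval s sigma) x d.
Proof.
  intros Hsigma; apply functional_extensionality; intro y.
  unfold subst_eval, upd; destruct (Nat.eqb_spec y x) as [-> | Hyx].
  - simpl; rewrite Nat.eqb_refl; reflexivity.
  - destruct (Hsigma y) as [-> | [k ->]]; simpl; [| reflexivity].
    apply Nat.eqb_neq in Hyx; rewrite Hyx; reflexivity.
Qed.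

Lemma sat_ground (phi : fo Fs Rs) (sigma : nat -> term Fs K) (s : nat -> dom A) :
  var_or_cst sigma ->
  (sat A ck s (ground sigma phi) <-> sat0 A (subst_eval s sigma) phi).
Proof.
  unfold sat0; revert sigma s.
  induction phi as [| | t u | r ts | p IHp | p IHp q IHq | p IHp q IHq
                   | p IHp q IHq | x p IHp | x p IHp];
    intros sigma s Hsigma; simpl; try tauto.
  - rewrite !teval_tground; tauto.
  - rewrite map_map; erewrite map_ext; [reflexivity |].
    intro t; apply teval_tground.
  - rewrite IHp by assumption; tauto.
  - rewrite IHp, IHq by assumption; tauto.
  - rewrite IHp, IHq by assumption; tauto.
  - rewrite IHp, IHq by assumption; tauto.
  - split; intros H d; specialize (H d);
      rewrite IHp, subst_eval_binder in * by auto using var_or_cst_binder; exact H.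
  - split; intros [d H]; exists d;
      rewrite IHp, subst_eval_binder in * by auto using var_or_cst_binder; exact H.
Qed.

End Grounding.

Lemma sat_inst (Fs Rs : Type) (A : structure Fs Rs) (ck : ext_const Fs Rs -> dom A)
  (s : nat -> dom A) (delta gamma : fo Fs Rs) :
  sat A ck s (inst delta gamma) <-> sat0 A (fun x => ck (x, delta)) gamma.
Proof.
  apply sat_ground; intro y; right; eauto.
Qed.

Section TeamToClassical.
Variables (Fs Rs : Type) (A : structure Fs Rs) (T : team A).

Lemma not_team_sat_fo_witness (delta : fo Fs Rs) :
  ~ team_sat_fo T delta -> exists s, T s /\ ~ sat0 A s delta.
Proof.
  intros Hdelta; apply NNPP; intros Hnone; apply Hdelta; intros s Ts.
  apply NNPP; intros Hs; apply Hnone; eauto.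
Qed.

(* Junk value for the [delta] outside Phi: any assignment, which needs a
   nonempty domain. *)
Lemma counterexample_choice (Phi : tform Fs Rs -> Prop) :
  (forall delta, Phi (TSNeg delta) -> ~ team_sat_fo T delta) ->
  exists cx : fo Fs Rs -> nat -> dom A,
    forall delta, Phi (TSNeg delta) -> T (cx delta) /\ ~ sat0 A (cx delta) delta.
Proof.
  intros HPhi; destruct (dom_inhabited A) as [d0].
  apply (choice (fun delta s => Phi (TSNeg delta) -> T s /\ ~ sat0 A s delta)).
  intro delta.
  destruct (classic (Phi (TSNeg delta))) as [Hin | Hout].
  - destruct (not_team_sat_fo_witness delta (HPhi delta Hin)) as [s Hs]; eauto.
  - exists (fun _ => d0); tauto.
Qed.

End TeamToClassical.

Lemma team_satisfiable_Phi_f (Fs Rs : Type) (Phi : tform Fs Rs -> Prop) :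
  team_satisfiable Phi -> classically_satisfiable (Phi_f Phi).
Proof.
  intros (A & T & HT).
  destruct (@counterexample_choice _ _ A T Phi (fun delta => HT (TSNeg delta))) as [cx Hcx].
  destruct (dom_inhabited A) as [d0].
  exists A, (fun c => cx (snd c) (fst c)), (fun _ => d0).
  intros psi [(gamma & delta & Hgamma & Hdelta & ->) | (delta & Hdelta & ->)].
  - apply sat_inst, (HT _ Hgamma), (Hcx _ Hdelta).
  - simpl; rewrite sat_inst; apply (Hcx _ Hdelta).
Qed.

Lemma Phi_f_team_satisfiable (Fs Rs : Type) (Phi : tform Fs Rs -> Prop) :
  classically_satisfiable (Phi_f Phi) -> team_satisfiable Phi.
Proof.
  intros (A & ck & s & Hsat).
  exists A, (fun s' => exists delta, Phi (TSNeg delta) /\ s' = (fun x => ck (x, delta))).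
  intros [gamma | delta] Hphi; simpl.
  - intros s' (delta & Hdelta & ->).
    apply (@sat_inst _ _ A ck s delta gamma), Hsat; left; eauto 6.
  - intros Hteam.
    assert (Hneg : sat A ck s (FNot (inst delta delta))) by (apply Hsat; right; eauto).
    apply Hneg, sat_inst, Hteam; eauto.
Qed.

Theorem mainTheorem5 (Fs Rs : Type) (Phi : tform Fs Rs -> Prop) :
  team_satisfiable Phi <-> classically_satisfiable (Phi_f Phi).
Proof.
  split; [apply team_satisfiable_Phi_f | apply Phi_f_team_satisfiable].
Qed.
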